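(* Let $\mathcal E$ and $\mathcal C$ be categories with finite sums and let $F:\mathcal E\to\mathcal C$ be a discrete fibration that preserves finite sums. Let $X$ be an object of $\mathcal E$ such that $FX$ is a sum of a finite family $A_i$ of objects of $\mathcal C$ (with injections $\iota_i:A_i\to FX$). Then $X$ is itself a sum of a family $X_i$ of objects of $\mathcal E$ with $FX_i=A_i$ (with injections $X_i\to X$ lying over the $\iota_i$).
   Context: A functor $F:\mathcal E\to\mathcal C$ is a discrete fibration if for every object $X$ of $\mathcal E$ and every arrow $a:A\to FX$ in $\mathcal C$ there is a unique arrow $x$ in $\mathcal E$ with codomain $X$ and $Fx=a$. *)

From Stdlib Require Import Fin.


Set Universe Polymorphism.

Record Category := {
  Ob :> Type;
  Hom : Ob -> Ob -> Type;
  idm : forall A, Hom A A;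
  comp : forall A B C, Hom B C -> Hom A B -> Hom A C;
  comp_id_l : forall A B (f : Hom A B), comp A B B (idm B) f = f;
  comp_id_r : forall A B (f : Hom A B), comp A A B f (idm A) = f;
  comp_assoc : forall A B C D (h : Hom C D) (g : Hom B C) (f : Hom A B),
      comp A C D h (comp A B C g f) = comp A B D (comp B C D h g) f
}.

Arguments Hom {c} _ _.
Arguments idm {c} _.
Arguments comp {c A B C} _ _.

Record Functor (E C : Category) := {
  fobj :> E -> C;
  fmap : forall X Y : E, @Hom E X Y -> @Hom C (fobj X) (fobj Y);
  fmap_id : forall X : E, fmap X X (@idm E X) = @idm C (fobj X);
  fmap_comp : forall (X Y Z : E) (g : @Hom E Y Z) (f : @Hom E X Y),
      fmap X Z (@comp E X Y Z g f) = @comp C _ _ _ (fmap Y Z g) (fmap X Y f)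
}.

Arguments fobj {E C} _ _.
Arguments fmap {E C} _ {X Y} _.

Definition arrow_into (C : Category) (B : C) := { A : C & Hom A B }.

(* F is a discrete fibration: for every X in E and every a : A -> F X there is
   a unique arrow x of E with codomain X (i.e. a unique pair (Y; x : Y -> X))
   with F x = a. *)
Definition discrete_fibration (E C : Category) (F : Functor E C) : Prop :=
  forall (X : E) (A : C) (a : Hom A (fobj F X)),
    exists y : @arrow_into E X,
      existT (fun B => Hom B (fobj F X)) (fobj F (projT1 y)) (fmap F (projT2 y))
        = existT _ A a
      /\ forall y' : @arrow_into E X,
           existT (fun B => Hom B (fobj F X)) (fobj F (projT1 y')) (fmap F (projT2 y'))
             = existT _ A a -> y' = y.

Definition is_sum (C : Category) (n : nat) (A : Fin.t n -> C) (S : C)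
    (inj : forall i, Hom (A i) S) : Prop :=
  forall (Z : C) (f : forall i, Hom (A i) Z),
    exists h : Hom S Z, (forall i, comp h (inj i) = f i) /\
      forall h' : Hom S Z, (forall i, comp h' (inj i) = f i) -> h' = h.

Definition has_finite_sums (C : Category) : Prop :=
  forall (n : nat) (A : Fin.t n -> C),
    exists (S : C) (inj : forall i, Hom (A i) S), is_sum C n A S inj.

Definition preserves_finite_sums (E C : Category) (F : Functor E C) : Prop :=
  forall (n : nat) (X : Fin.t n -> E) (S : E) (inj : forall i, Hom (X i) S),
    is_sum E n X S inj ->
    is_sum C n (fun i => fobj F (X i)) (fobj F S) (fun i => fmap F (inj i)).

(* Lift each injection iota_i uniquely to x_i : X_i -> X, and compare a sum S
   of the X_i with X through the induced h : S -> X.  Since F preserves sums,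
   F h is the comparison between two sums of the A_i in C, hence invertible.
   A discrete fibration reflects isomorphisms (lift the inverse of F h; the
   composites lie over identities, so they are identities by uniqueness of
   lifts), so h is an isomorphism and X is a sum of the X_i. *)
From Stdlib Require Import Fin.
From Stdlib Require Import IndefiniteDescription FunctionalExtensionality Eqdep.

Section Sums.

Variables (C : Category) (n : nat) (A : Fin.t n -> C).

Lemma sum_hom_ext (S Z : C) (s : forall i, Hom (A i) S) (u v : Hom S Z) :
  is_sum C n A S s -> (forall i, comp u (s i) = comp v (s i)) -> u = v.
Proof.
  intros HS Huv.
  destruct (HS Z (fun i => comp v (s i))) as [w [_ Hw]].
  rewrite (Hw u Huv), (Hw v); reflexivity.
Qed.

Lemma sum_comparison_iso (S T : C) (s : forall i, Hom (A i) S)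
  (t : forall i, Hom (A i) T) (h : Hom S T) :
  is_sum C n A S s -> is_sum C n A T t -> (forall i, comp h (s i) = t i) ->
  exists g : Hom T S, comp g h = idm S /\ comp h g = idm T.
Proof.
  intros HS HT Hh.
  destruct (HT S s) as [g [Hg _]].
  exists g; split.
  - apply (sum_hom_ext S S s _ _ HS); intro i.
    rewrite <- comp_assoc, Hh, Hg, comp_id_l; reflexivity.
  - apply (sum_hom_ext T T t _ _ HT); intro i.
    rewrite <- comp_assoc, Hg, Hh, comp_id_l; reflexivity.
Qed.

Lemma is_sum_iso (S T : C) (s : forall i, Hom (A i) S)
  (t : forall i, Hom (A i) T) (h : Hom S T) (k : Hom T S) :
  is_sum C n A S s -> comp k h = idm S -> comp h k = idm T ->
  (forall i, comp h (s i) = t i) -> is_sum C n A T t.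
Proof.
  intros HS Hkh Hhk Ht Z f.
  destruct (HS Z f) as [u [Hu Hu_uniq]].
  exists (comp u k); split.
  - intro i.
    rewrite <- Ht, <- comp_assoc, (comp_assoc _ _ _ _ _ k h), Hkh, comp_id_l.
    apply Hu.
  - intros v Hv.
    assert (Hvh : comp v h = u).
    { apply Hu_uniq; intro i. rewrite <- comp_assoc, Ht. apply Hv. }
    rewrite <- Hvh, <- comp_assoc, Hhk, comp_id_r; reflexivity.
Qed.

End Sums.

Lemma is_sum_transport (C : Category) (n : nat) (A A' : Fin.t n -> C) (T : C)
  (f : forall i, Hom (A i) T) (f' : forall i, Hom (A' i) T) :
  (forall i, existT (fun B => Hom B T) (A' i) (f' i) = existT _ (A i) (f i)) ->
  is_sum C n A T f -> is_sum C n A' T f'.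
Proof.
  intros Heq HS.
  pose (p' := fun i => existT (fun B => Hom B T) (A' i) (f' i)).
  assert (Hp : p' = fun i => existT (fun B => Hom B T) (A i) (f i))
    by (apply functional_extensionality; exact Heq).
  change (is_sum C n (fun i => projT1 (p' i)) T (fun i => projT2 (p' i))).
  rewrite Hp; exact HS.
Qed.

Lemma arrow_into_postcomp (C : Category) (B B' : C) (g : Hom B B')
  (A A' : C) (a : Hom A B) (a' : Hom A' B) :
  existT (fun D => Hom D B) A a = existT _ A' a' ->
  existT (fun D => Hom D B') A (comp g a) = existT _ A' (comp g a').
Proof.
  intro Ha.
  exact (f_equal (fun p : arrow_into C B => existT _ (projT1 p) (comp g (projT2 p))) Ha).
Qed.

Definition arrow_image {E C : Category} (F : Functor E C) {X : E}
  (y : arrow_into E X) : arrow_into C (fobj F X) :=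
  existT _ (fobj F (projT1 y)) (fmap F (projT2 y)).

Section DiscreteFibration.

Variables (E C : Category) (F : Functor E C).
Hypothesis hF : discrete_fibration E C F.

Lemma arrow_image_inj (X : E) (y y' : arrow_into E X) :
  arrow_image F y = arrow_image F y' -> y = y'.
Proof.
  destruct y' as [Y' y']; intro Hyy'.
  destruct (hF X (fobj F Y') (fmap F y')) as [z [_ Hz]].
  rewrite (Hz _ Hyy'), (Hz (existT _ Y' y')); reflexivity.
Qed.

Lemma discrete_fibration_reflects_iso (S X : E) (h : Hom S X)
  (g : Hom (fobj F X) (fobj F S)) :
  comp g (fmap F h) = idm _ -> comp (fmap F h) g = idm _ ->
  exists k : Hom X S, comp k h = idm S /\ comp h k = idm X.
Proof.
  intros Hgh Hhg.
  destruct (hF S (fobj F X) g) as [[Y k] [Hk _]]; simpl in Hk.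
  assert (Hhk : existT (fun Z => Hom Z X) Y (comp h k)
                = existT (fun Z => Hom Z X) X (idm X)).
  { apply arrow_image_inj; unfold arrow_image; simpl.
    rewrite fmap_comp, fmap_id, <- Hhg.
    exact (arrow_into_postcomp C _ _ (fmap F h) _ _ _ _ Hk). }
  pose proof (f_equal (@projT1 _ _) Hhk) as HY; simpl in HY; subst Y.
  apply inj_pair2 in Hk, Hhk.
  exists k; split; [| exact Hhk].
  apply (inj_pair2 E (fun Z => Hom Z S)), arrow_image_inj; unfold arrow_image; simpl.
  rewrite fmap_comp, fmap_id, Hk, Hgh; reflexivity.
Qed.

End DiscreteFibration.

Theorem proposition2p4 (E C : Category) (F : Functor E C)
  (hE : has_finite_sums E) (hC : has_finite_sums C)
  (hF : discrete_fibration E C F) (hFs : preserves_finite_sums E C F)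
  (X : E) (n : nat) (A : Fin.t n -> C) (iota : forall i, Hom (A i) (fobj F X))
  (hsum : is_sum C n A (fobj F X) iota) :
  exists (Xs : Fin.t n -> E) (inj : forall i, Hom (Xs i) X),
    is_sum E n Xs X inj /\
    forall i,
      existT (fun B => Hom B (fobj F X)) (fobj F (Xs i)) (fmap F (inj i))
        = existT _ (A i) (iota i).
Proof.
  destruct (functional_choice
              (fun i (y : arrow_into E X) => arrow_image F y = existT _ (A i) (iota i)))
    as [x Hx].
  { intro i; destruct (hF X (A i) (iota i)) as [y [Hy _]]; exists y; exact Hy. }
  exists (fun i => projT1 (x i)), (fun i => projT2 (x i)).
  split; [| exact Hx].
  destruct (hE n (fun i => projT1 (x i))) as [S [s HS]].
  destruct (HS X (fun i => projT2 (x i))) as [h [Hh _]].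
  assert (HFX : is_sum C n (fun i => fobj F (projT1 (x i))) (fobj F X)
                  (fun i => fmap F (projT2 (x i))))
    by exact (is_sum_transport C n A _ _ _ _ Hx hsum).
  destruct (sum_comparison_iso C n _ _ _ _ _ (fmap F h) (hFs n _ S s HS) HFX)
    as [g [Hgh Hhg]].
  { intro i; rewrite <- fmap_comp, Hh; reflexivity. }
  destruct (discrete_fibration_reflects_iso E C F hF S X h g Hgh Hhg) as [k [Hkh Hhk]].
  exact (is_sum_iso E n _ S X s _ h k HS Hkh Hhk Hh).
Qed.
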